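(* A strong erasing word for $(G,\phi)$ exists in each of the following cases: (i) $G$ is a non-bipartite separable graph and $\phi$ is any admissible matching policy; (ii) $G$ is connected and non-bipartite and $\phi=\textsc{lcfm}$.
   Context: $G=(\mathcal V,\mathcal E)$ is a finite connected simple graph, $i - j$ denotes adjacency. $G$ is separable of order $p\ge2$ if $\mathcal V$ is partitioned into maximal independent sets $\mathcal I_1,\dots,\mathcal I_p$ such that any two nodes in different parts are adjacent; a separable graph is non-bipartite iff $p\ge3$. A list of preferences $\sigma\in\mathcal S$ gives for each class a linear ordering of its neighbours; $\phi$ comes with a probability $\nu_\phi$ on $\mathcal S$. $\mathbb W=\{w\in\mathcal V^*:|w|_i|w|_j=0 \text{ whenever } i - j\}$. Admissible $\phi$: a map $\odot_\phi:\mathbb W\times(\mathcal V\times\mathcal S)\to\mathbb W$ with $w\odot_\phi(v,\sigma)=wv$ if no letter of $w$ is adjacent to $v$, otherwise $w$ with one letter adjacent to $v$ (chosen by $\phi$) deleted; LCFM deletes the rightmost letter of $w$ adjacent to $v$. $Q_\phi(z_1\cdots z_k,\varsigma_1\cdots\varsigma_k)=(\cdots(\emptyset\odot_\phi(z_1,\varsigma_1))\cdots)\odot_\phi(z_k,\varsigma_k)$. A word $z\in\mathcal V^*$ of even length $2p$ is a strong erasing word for $(G,\phi)$ if (1) for all non-adjacent $i,j\in\mathcal V$ (possibly $i=j$) and all preference words $\varsigma,\varsigma'$ of lengths $2$ and $2p$ with letters in the support of $\nu_\phi$, $Q_\phi(ijz,\varsigma\varsigma')=\emptyset$; and (2) for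 every $\ell\in\{0,\dots,p-1\}$ and all such $\varsigma'$, $Q_\phi(z_{2\ell+1}\cdots z_{2p},\varsigma'_{2\ell+1}\cdots\varsigma'_{2p})=\emptyset$. *)

From mathcomp Require Import all_boot.
Set Implicit Arguments. Unset Strict Implicit. Unset Printing Implicit Defensive.

Section Defs.
Variables (V : finType) (e : rel V).

Definition bipartite : Prop := exists c : V -> bool, forall x y, e x y -> c x != c y.

Definition separable_of_order (p : nat) : Prop :=
  2 <= p /\ exists f : V -> 'I_p, (forall k, exists x, f x = k) /\
                                  (forall x y, e x y = (f x != f y)).
Definition separable : Prop := exists p, separable_of_order p.

Definition prefs := {s : V -> seq V | forall i, uniq (s i) /\ perm_eq (s i) (enum (e i))}.

Definition inW (w : seq V) : bool := all (fun x => all (fun y => ~~ e x y) w) w.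

Definition admissible (op : seq V -> V -> prefs -> seq V) : Prop :=
  forall w v s, inW w ->
    (~~ has (e v) w -> op w v s = rcons w v) /\
    (has (e v) w -> exists2 k, k < size w &
        e (nth v w k) v /\ op w v s = take k w ++ drop k.+1 w).

(* LCFM: delete the rightmost letter of w adjacent to v *)
Definition lcfm (w : seq V) (v : V) (s : prefs) : seq V :=
  if has (e v) w then
    let k := size w - (find (e v) (rev w)).+1 in take k w ++ drop k.+1 w
  else rcons w v.

Fixpoint Qrun (op : seq V -> V -> prefs -> seq V) (w : seq V)
         (z : seq V) (ss : seq prefs) : seq V :=
  match z, ss with
  | x :: z', s :: ss' => Qrun op (op w x s) z' ss'
  | _, _ => w
  end.

Definition Q op z ss := Qrun op [::] z ss.

(* strong erasing word, supp = support of nu_phi *)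
Definition strong_erasing (op : seq V -> V -> prefs -> seq V) (supp : pred prefs)
  (z : seq V) : Prop :=
  ~~ odd (size z) /\
  (forall i j, ~~ e i j -> forall s s' : seq prefs,
      size s = 2 -> size s' = size z -> all supp s -> all supp s' ->
      Q op (i :: j :: z) (s ++ s') = [::]) /\
  (forall l, l < (size z)./2 -> forall s' : seq prefs,
      size s' = size z -> all supp s' ->
      Q op (drop l.*2 z) (drop l.*2 s') = [::]).

End Defs.

From mathcomp Require Import all_boot zify.
Set Implicit Arguments. Unset Strict Implicit. Unset Printing Implicit Defensive.

(* For a separable graph, an admissible policy keeps its buffer inside a single
   part, so only that part and the buffer length matter.  Two non-adjacent
   arrivals leave a buffer of length 2, and the word u1 u2 u2 u3 u3 u1 through
   three distinct parts empties it, because no part meets all three of its edges.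
   For LCFM on a connected non-bipartite graph any two vertices are joined by an
   even walk; read backwards from a neighbour of o, an even walk from t gives a
   word of edges erasing the buffer [o; t].  A word of edges turns a buffer of two
   non-adjacent letters into another such buffer or into the empty one, so
   concatenating these words over all pairs erases every pair at once.  In both
   cases the erasing word is a sequence of edges, so all its even suffixes are
   erasing as well. *)

Section EdgeWords.
Variables (V : eqType) (e : rel V).

Fixpoint edge_word (z : seq V) : bool :=
  match z with
  | x :: y :: z' => e x y && edge_word z'
  | [::] => true
  | _ => false
  end.

Lemma edge_word_ind (P : seq V -> Prop) :
  P [::] -> (forall x y z, e x y -> edge_word z -> P z -> P [:: x, y & z]) ->
  forall z, edge_word z -> P z.
Proof.
move=> P0 PS; fix IH 1 => -[|x [|y z]] //= /andP[exy ez].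
exact: PS (IH z ez).
Qed.

Lemma edge_word_cat z1 z2 : edge_word z1 -> edge_word z2 -> edge_word (z1 ++ z2).
Proof. by move=> + ez2; move: z1; apply: edge_word_ind => //= x y z -> _. Qed.

Lemma edge_word_drop n z : edge_word z -> edge_word (drop n.*2 z).
Proof.
elim: n z => [|n IH] z; first by rewrite drop0.
by case: z => [|x [|y z]] //= /andP[_ /IH].
Qed.

Lemma edge_word_even z : edge_word z -> ~~ odd (size z).
Proof. by move: z; apply: edge_word_ind => //= x y z _ _; rewrite negbK. Qed.

End EdgeWords.

Section MatchingPolicies.
Variables (V : finType) (e : rel V) (op : seq V -> V -> prefs e -> seq V).
Hypotheses (op_nil : forall x s, op [::] x s = [:: x])
           (op_edge : forall x y s, e x y -> op [:: x] y s = [::]).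

Lemma Q_edge_word z ss : edge_word e z -> size z <= size ss -> Q op z ss = [::].
Proof.
move=> ez; rewrite /Q; move: z ez ss.
apply: edge_word_ind => [|x y z exy _ IH] [|s1 [|s2 ss]] //= z_ss.
by rewrite op_nil op_edge //; apply: IH.
Qed.

Lemma strong_erasing_edge_word supp z : edge_word e z ->
  (forall i j, ~~ e i j -> forall ss, size ss = (size z).+2 ->
     Q op [:: i, j & z] ss = [::]) ->
  strong_erasing op supp z.
Proof.
move=> ez erase_pairs; split; first exact: edge_word_even ez.
split=> [i j nij s s' s2 s'z _ _ | l _ s' s'z _].
  by apply: erase_pairs => //; rewrite size_cat s2 s'z.
by apply: Q_edge_word; [exact: edge_word_drop | rewrite !size_drop s'z].
Qed.

End MatchingPolicies.

Section Admissible.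
Variables (V : finType) (e : rel V) (op : seq V -> V -> prefs e -> seq V).
Hypotheses (e_sym : symmetric e) (e_irr : irreflexive e) (op_adm : admissible op).

Lemma admissible_nil x s : op [::] x s = [:: x].
Proof. by have [-> //] := @op_adm [::] x s isT. Qed.

Lemma admissible_edge x y s : e x y -> op [:: x] y s = [::].
Proof.
move=> exy; have x_W : inW e [:: x] by rewrite /inW /= e_irr.
have [_ op_del] := @op_adm [:: x] y s x_W.
have y_nb : has (e y) [:: x] by rewrite /= e_sym exy.
by have [[|k] //= _ [_ ->]] := op_del y_nb.
Qed.

End Admissible.

Section SeparableGraphs.
Variables (V : finType) (e : rel V) (p : nat) (f : V -> 'I_p).
Hypothesis e_part : forall x y, e x y = (f x != f y).

Lemma le2_parts_bipartite : p <= 2 -> bipartite e.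
Proof.
move=> p_le2; exists (fun x => val (f x) == 0) => x y.
rewrite e_part -(inj_eq val_inj).
by case: (f x) (f y) => [[|[|a]] ?] [[|[|b]] ?] //=; exfalso; lia.
Qed.

(* The buffer of an admissible policy lies in a single part; a state records
   that part and the length of the buffer. *)
Definition buffer_step (st : 'I_p * nat) (v : V) : 'I_p * nat :=
  if (st.2 == 0) || (f v == st.1) then (f v, st.2.+1) else (st.1, st.2.-1).

Definition buffer_fits (st : 'I_p * nat) (w : seq V) : bool :=
  all (fun x => f x == st.1) w && (size w == st.2).

Lemma admissible_buffer_step (op : seq V -> V -> prefs e -> seq V)
  (op_adm : admissible op) st w v s :
  buffer_fits st w -> buffer_fits (buffer_step st v) (op w v s).
Proof.
case: st => a n /andP[/allP /= w_a /eqP <-{n}].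
have w_W : inW e w.
  by apply/allP=> x /w_a/eqP fx; apply/allP=> y /w_a/eqP fy; rewrite e_part fx fy eqxx.
have [op_add op_del] := op_adm w v s w_W.
rewrite /buffer_step /=; case: ifP => [grow | /norP[/eqP w_n0 /negbTE v_a]].
  have w_same : all (fun x => f x == f v) w.
    apply/allP=> x x_w; case/orP: grow => [/eqP/size0nil w0 | /eqP->].
      by rewrite w0 in x_w.
    exact: w_a.
  rewrite op_add; last by apply/hasPn=> x /(allP w_same); rewrite e_part eq_sym negbK.
  by rewrite /buffer_fits all_rcons eqxx w_same size_rcons eqxx.
have [|k k_lt [_ ->]] := op_del.
  case: w w_a w_n0 {w_W op_add op_del} => [|x w] //= w_a _.
  by rewrite e_part (eqP (w_a x (mem_head x w))) v_a.
rewrite /buffer_fits all_cat size_cat size_take size_drop k_lt /=.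
apply/andP; split; last by apply/eqP; lia.
by apply/andP; split; apply/allP=> x x_in; apply: w_a;
  [exact: mem_take x_in | exact: mem_drop x_in].
Qed.

Lemma Qrun_buffer_fits (op : seq V -> V -> prefs e -> seq V)
  (op_adm : admissible op) z st w ss :
  buffer_fits st w -> size z <= size ss ->
  buffer_fits (foldl buffer_step st z) (Qrun op w z ss).
Proof.
elim: z st w ss => [|x z IH] st w [|s ss] //= w_st z_ss.
by apply: IH => //; apply: admissible_buffer_step.
Qed.

Lemma buffer_step_edge_from_empty a x y : e x y ->
  foldl buffer_step (a, 0) [:: x; y] = (f x, 0).
Proof. by rewrite e_part /= /buffer_step /= eq_sym => /negbTE->. Qed.

Lemma buffer_step_edge_from_two a x y : e x y ->
  foldl buffer_step (a, 2) [:: x; y] = (a, if (f x == a) || (f y == a) then 2 else 0).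
Proof.
rewrite e_part /= /buffer_step /=.
have [-> | _] := eqVneq (f x) a; first by rewrite /= eq_sym => /negbTE->.
by rewrite /= => _; case: eqP => [->|].
Qed.

Lemma buffer_count_triangle a u1 u2 u3 : e u1 u2 -> e u2 u3 -> e u3 u1 ->
  (foldl buffer_step (a, 2) [:: u1; u2; u2; u3; u3; u1]).2 = 0.
Proof.
move=> e12 e23 e31.
change [:: u1; u2; u2; u3; u3; u1] with ([:: u1; u2] ++ [:: u2; u3] ++ [:: u3; u1]).
rewrite !foldl_cat.
rewrite buffer_step_edge_from_two //; case: ifP => [in12 | _]; last first.
  by rewrite !buffer_step_edge_from_empty.
rewrite buffer_step_edge_from_two //; case: ifP => [in23 | _]; last first.
  by rewrite buffer_step_edge_from_empty.
rewrite buffer_step_edge_from_two //; case: ifP => // in31.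
move: e12 e23 e31; rewrite !e_part => /eqP n12 /eqP n23 /eqP n31.
by case/orP: in12 in23 in31 => /eqP ? /orP[] /eqP ? /orP[] /eqP ?; congruence.
Qed.

End SeparableGraphs.

Lemma separable_nonbipartite_triangle (V : finType) (e : rel V) :
  separable e -> ~ bipartite e ->
  exists p (f : V -> 'I_p), (forall x y, e x y = (f x != f y)) /\
    exists u1 u2 u3, [/\ e u1 u2, e u2 u3 & e u3 u1].
Proof.
move=> [p [_ [f [f_onto e_part]]]] nonbip; exists p, f; split=> //.
have p_gt2 : 2 < p by rewrite ltnNge; apply/negP => /(le2_parts_bipartite e_part).
have [u1 f_u1] := f_onto (Ordinal (ltnW (ltnW p_gt2))).
have [u2 f_u2] := f_onto (Ordinal (ltnW p_gt2)).
have [u3 f_u3] := f_onto (Ordinal p_gt2).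
by exists u1, u2, u3; rewrite !e_part f_u1 f_u2 f_u3.
Qed.

Lemma separable_strong_erasing (V : finType) (e : rel V) :
  separable e -> ~ bipartite e ->
  forall op : seq V -> V -> prefs e -> seq V, admissible op ->
  forall supp : pred (prefs e), exists z : seq V, strong_erasing op supp z.
Proof.
move=> sep nonbip op op_adm supp.
have [p [f [e_part [u1 [u2 [u3 [e12 e23 e31]]]]]]] :=
  separable_nonbipartite_triangle sep nonbip.
have e_sym : symmetric e by move=> x y; rewrite !e_part eq_sym.
have e_irr : irreflexive e by move=> x; rewrite e_part eqxx.
set z := [:: u1; u2; u2; u3; u3; u1]; exists z.
apply: strong_erasing_edge_word.
- exact: admissible_nil.
- exact: admissible_edge.
- by rewrite /= e12 e23 e31.
move=> i j nij ss size_ss.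
have := Qrun_buffer_fits e_part op_adm (z := [:: i, j & z]) (st := (f i, 0))
  (w := [::]) isT (eq_leq (esym size_ss)).
rewrite -[ [:: i, j & z] ]/([:: i; j] ++ z) foldl_cat.
have -> : foldl (buffer_step f) (f i, 0) [:: i; j] = (f j, 2).
  by move: nij; rewrite e_part negbK /= /buffer_step /= eq_sym => ->.
by case/andP=> _; rewrite (buffer_count_triangle e_part) // size_eq0 => /eqP.
Qed.

Section DoubleCover.
Variables (V : finType) (e : rel V).
Hypotheses (e_sym : symmetric e) (e_conn : forall x y, connect e x y).

(* A walk from (x, false) to (y, b) projects to a walk from x to y of parity b. *)
Definition double_cover : rel (V * bool) :=
  fun u v => e u.1 v.1 && (v.2 == ~~ u.2).

Lemma double_cover_sym : connect_sym double_cover.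
Proof.
apply: sym_connect_sym => -[x b] [y c].
by rewrite /double_cover /= e_sym; case: b; case: c.
Qed.

Lemma double_cover_flip x y b c :
  connect double_cover (x, b) (y, c) -> connect double_cover (x, ~~ b) (y, ~~ c).
Proof.
case/connectP=> p; elim: p x b => [|[z d] p IH] x b /=; first by move=> _ [-> ->].
case/andP=> /andP[/= xz /eqP ->] zp last_p; apply: connect_trans (IH _ _ zp last_p).
by apply: connect1; rewrite /double_cover /= xz eqxx.
Qed.

Lemma double_cover_lift a x b : exists c, connect double_cover (a, b) (x, c).
Proof.
case/connectP: (e_conn a x) => p; elim: p a b => [|y p IH] a b /=.
  by move=> _ ->; exists b.
case/andP=> ay yp last_p; have [c yc] := IH y (~~ b) yp last_p.
by exists c; apply: connect_trans yc; apply: connect1; rewrite /double_cover /= ay eqxx.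
Qed.

Lemma double_cover_both_sheets a y b :
  connect double_cover (a, false) (y, b) -> connect double_cover (a, false) (y, ~~ b) ->
  connect double_cover (a, false) (a, true).
Proof.
move=> ayb; rewrite double_cover_sym => /double_cover_flip; rewrite negbK.
exact: connect_trans.
Qed.

Lemma nonbipartite_odd_closed_walk a :
  ~ bipartite e -> connect double_cover (a, false) (a, true).
Proof.
move=> nonbip; apply/idPn => no_odd; apply: nonbip.
pose col x := connect double_cover (a, false) (x, true).
have reach_col x : connect double_cover (a, false) (x, col x).
  case col_x: (col x); first exact: col_x.
  by have [[] ax] := double_cover_lift a x false; rewrite // -/(col x) col_x in ax.
exists col => x y xy; apply/negP => /eqP same.
have ay : connect double_cover (a, false) (y, ~~ col x).
  by apply: connect_trans (reach_col x) _; apply: connect1; rewrite /double_cover /= xy eqxx.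
by move: (double_cover_both_sheets (reach_col y)); rewrite -same => /(_ ay); apply/negP.
Qed.

Lemma nonbipartite_even_walk a x :
  ~ bipartite e -> connect double_cover (a, false) (x, false).
Proof.
move=> nonbip; have [[] ax] := double_cover_lift a x false => //.
exact: connect_trans (nonbipartite_odd_closed_walk a nonbip) (double_cover_flip ax).
Qed.

Lemma nonbipartite_neighbor o : ~ bipartite e -> exists n, e o n.
Proof.
move=> nonbip; case/connectP: (nonbipartite_odd_closed_walk o nonbip) => -[|[n b] p] //=.
by case/andP=> /andP[on _] _ _; exists n.
Qed.

End DoubleCover.

Section LCFM.
Variables (V : finType) (e : rel V).
Hypotheses (e_sym : symmetric e) (e_conn : forall x y, connect e x y).
Implicit Types (w z : seq V) (s : prefs e).

Lemma lcfm_nil x s : lcfm [::] x s = [:: x].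
Proof. by []. Qed.

Lemma lcfm_single x y s : lcfm [:: x] y s = if e y x then [::] else [:: x; y].
Proof. by rewrite /lcfm /= orbF; case: (e y x). Qed.

Lemma lcfm_edge x y s : e x y -> lcfm [:: x] y s = [::].
Proof. by rewrite lcfm_single e_sym => ->. Qed.

Lemma lcfm_pair_last i j x s : e x j -> lcfm [:: i; j] x s = [:: i].
Proof. by move=> xj; rewrite /lcfm /= xj orbT. Qed.

Lemma lcfm_pair_first i j x s : ~~ e x j -> e x i -> lcfm [:: i; j] x s = [:: j].
Proof. by move=> /negbTE xj xi; rewrite /lcfm /= xj xi. Qed.

Lemma lcfm_pair_none i j x s : ~~ e x j -> ~~ e x i -> lcfm [:: i; j] x s = [:: i; j; x].
Proof. by move=> /negbTE xj /negbTE xi; rewrite /lcfm /= xj xi. Qed.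

Lemma lcfm_triple_last i j x y s : e y x -> lcfm [:: i; j; x] y s = [:: i; j].
Proof. by move=> yx; rewrite /lcfm /= yx !orbT. Qed.

Variable s0 : prefs e.

(* [lcfm] ignores the preferences, so a single list of preferences suffices. *)
Definition lcfm_run w z : seq V := foldl (fun w v => lcfm w v s0) w z.

Lemma lcfm_run_cons w x z : lcfm_run w (x :: z) = lcfm_run (lcfm w x s0) z.
Proof. by []. Qed.

Lemma lcfm_run_cat w z1 z2 : lcfm_run w (z1 ++ z2) = lcfm_run (lcfm_run w z1) z2.
Proof. exact: foldl_cat. Qed.

Lemma Qrun_lcfm w z ss : size z <= size ss -> Qrun (@lcfm V e) w z ss = lcfm_run w z.
Proof. by elim: z w ss => [|x z IH] w [|s ss] //= z_ss; rewrite IH. Qed.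

Lemma lcfm_run_edge_word z : edge_word e z -> lcfm_run [::] z = [::].
Proof.
move=> ez; have z_ss : size z <= size (nseq (size z) s0) by rewrite size_nseq.
by rewrite -(Qrun_lcfm _ z_ss); apply: (Q_edge_word lcfm_nil lcfm_edge ez).
Qed.

Lemma lcfm_run_nonadjacent_pair z i j : edge_word e z -> ~~ e i j ->
  lcfm_run [:: i; j] z = [::] \/
  exists2 ij : V * V, ~~ e ij.1 ij.2 & lcfm_run [:: i; j] z = [:: ij.1; ij.2].
Proof.
move=> ez; elim/edge_word_ind: z / ez i j => [|x y z xy ez IH] i j nij.
  by right; exists (i, j).
have yx : e y x by rewrite e_sym.
rewrite !lcfm_run_cons.
have [xj | nxj] := boolP (e x j).
  rewrite lcfm_pair_last // lcfm_single; case: ifP => [_ | /negbT nyi].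
    by left; apply: lcfm_run_edge_word.
  by apply: IH; rewrite e_sym.
have [xi | nxi] := boolP (e x i).
  rewrite lcfm_pair_first // lcfm_single; case: ifP => [_ | /negbT nyj].
    by left; apply: lcfm_run_edge_word.
  by apply: IH; rewrite e_sym.
by rewrite lcfm_pair_none // lcfm_triple_last //; apply: IH.
Qed.

Definition lcfm_erasable w : Prop := exists2 z, edge_word e z & lcfm_run w z = [::].

Lemma lcfm_erasable_nil : lcfm_erasable [::].
Proof. by exists [::]. Qed.

(* Read backwards from n, each edge of the walk adds one letter to the erasing
   word; the parity bit tells whether the buffer is [o; u.1] or [o] followed by a
   pending neighbour of u.1. *)
Lemma lcfm_erasable_along_walk o n : e o n ->
  forall p u, path (double_cover e) u p -> last u p = (n, false) ->
  if u.2 then exists2 y, e u.1 y & lcfm_erasable (lcfm [:: o] y s0)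
  else lcfm_erasable [:: o; u.1].
Proof.
move=> on; elim=> [|[w b] p IH] [x c] /=.
  move=> _ [-> ->]; exists [:: o; n]; first by rewrite /= on.
  by rewrite !lcfm_run_cons lcfm_pair_last // lcfm_edge.
case/andP=> /andP[/= xw /eqP ->] /IH IHw /IHw /=.
case: c {IHw} => /= [erase_ow | [y wy [z ez erase_z]]].
  exists w => //; rewrite lcfm_single; case: ifP => // _; exact: lcfm_erasable_nil.
exists [:: w, y & z]; first by rewrite /= wy.
by rewrite !lcfm_run_cons lcfm_pair_last // e_sym.
Qed.

Lemma lcfm_erasable_pair o t : ~ bipartite e -> lcfm_erasable [:: o; t].
Proof.
move=> nonbip; have [n on] := nonbipartite_neighbor e_sym e_conn o nonbip.
case/connectP: (nonbipartite_even_walk e_sym e_conn t n nonbip) => p tp /esym last_p.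
exact: (lcfm_erasable_along_walk on tp last_p).
Qed.

Lemma lcfm_erasing_word_for_pairs (L : seq (V * V)) : ~ bipartite e ->
  exists2 z, edge_word e z &
    forall i j, (i, j) \in L -> ~~ e i j -> lcfm_run [:: i; j] z = [::].
Proof.
move=> nonbip; elim: L => [|[i j] L [z0 ez0 erase0]]; first by exists [::].
have erase_ext z1 : edge_word e z1 ->
    forall i' j', (i', j') \in L -> ~~ e i' j' -> lcfm_run [:: i'; j'] (z0 ++ z1) = [::].
  by move=> ez1 i' j' inL nij; rewrite lcfm_run_cat erase0 // lcfm_run_edge_word.
have [ij | nij] := boolP (e i j).
  exists z0 => // i' j'; rewrite inE => /orP[/eqP[-> ->] | /erase0 //].
  by rewrite ij.
case: (lcfm_run_nonadjacent_pair ez0 nij) => [erase_ij | [[i' j'] /= nij' ij_z0]].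
  by exists z0 => // i' j'; rewrite inE => /orP[/eqP[-> ->] | /erase0].
have [z1 ez1 erase_z1] := lcfm_erasable_pair i' j' nonbip.
exists (z0 ++ z1); first exact: edge_word_cat.
move=> i'' j''; rewrite inE => /orP[/eqP[-> ->] _ | /erase_ext]; last exact.
by rewrite lcfm_run_cat ij_z0.
Qed.

Lemma lcfm_strong_erasing (supp : pred (prefs e)) :
  ~ bipartite e -> exists z, strong_erasing (@lcfm V e) supp z.
Proof.
move=> nonbip.
have [z ez erase_pairs] := lcfm_erasing_word_for_pairs (enum {: V * V}) nonbip.
exists z; apply: (strong_erasing_edge_word lcfm_nil lcfm_edge supp ez).
move=> i j nij ss size_ss; rewrite /Q Qrun_lcfm ?size_ss //.
rewrite !lcfm_run_cons lcfm_nil lcfm_single e_sym (negbTE nij).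
by apply: erase_pairs; rewrite ?mem_enum.
Qed.

End LCFM.

Theorem mainTheorem11 (V : finType) (e : rel V)
  (e_sym : symmetric e) (e_irr : irreflexive e)
  (e_conn : forall x y, connect e x y) :
  ((separable e /\ ~ bipartite e) ->
     forall op : seq V -> V -> prefs e -> seq V, admissible op ->
     forall supp : pred (prefs e), (exists s, supp s) ->
     exists z : seq V, strong_erasing op supp z)
  /\
  (~ bipartite e ->
     forall supp : pred (prefs e), (exists s, supp s) ->
     exists z : seq V, strong_erasing (@lcfm V e) supp z).
Proof.
split=> [[sep nonbip] op op_adm supp _ | nonbip supp [s _]].
  exact: separable_strong_erasing.
exact: (lcfm_strong_erasing e_sym e_conn s).
Qed.
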